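(* For every (finite or infinite) cardinal $\kappa$ there is a cardinal $\lambda_\kappa \leq \mathsf{exp}_{10}(\kappa)$ such that every $\kappa$-edge-coloured (possibly infinite) tournament $T$ admits a king-serf duo by monochromatic paths of size at most $\lambda_\kappa$. Moreover, for finite $\kappa$ one can guarantee $\lambda_\kappa \leq \kappa^{62500\kappa}$.
   Context: A tournament $T=(V(T),A(T))$ is a directed graph obtained by orienting every edge of a (possibly infinite) complete undirected graph. For a cardinal $\kappa$, $\mathsf{exp}_0(\kappa)=\kappa$ and $\mathsf{exp}_{k+1}(\kappa)=2^{\mathsf{exp}_k(\kappa)}$. A cardinal is identified with the set of smaller ordinals. A $\kappa$-edge-colouring of $T$ is a function $c:A(T)\to\kappa$. A monochromatic path is a directed path (no repeated vertices) all of whose edges have the same colour. A king-serf duo by monochromatic paths in an edge-coloured tournament $T$ is a pair of disjoint vertex sets $K,S\subseteq V(T)$ such that every vertex $v$ has a monochromatic path of length at most two from some vertex of $K$ to $v$ or from $v$ to some vertex of $S$. Its size is $|K|+|S|$. *)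

From HB Require Import structures.
From mathcomp Require Import all_boot.
From mathcomp Require Import boolp classical_sets functions cardinality.
Set Implicit Arguments. Unset Strict Implicit. Unset Printing Implicit Defensive.
Local Open Scope classical_set_scope.

Definition tournament (V : Type) (E : V -> V -> bool) : Prop :=
  (forall v, ~~ E v v) /\
  (forall u v, u <> v -> (E u v || E v u)) /\
  (forall u v, E u v -> ~~ E v u).

Definition colouring (V Col : Type) (E : V -> V -> bool) :=
  forall u v : V, E u v -> Col.

Definition mono_path_le2 (V Col : Type) (E : V -> V -> bool)
    (c : colouring Col E) (x y : V) : Prop :=
  x = y \/ E x y \/
  exists (z : V) (h1 : E x z) (h2 : E z y),
    [/\ x <> z, z <> y, x <> y & c x z h1 = c z y h2].

Definition king_serf_duo (V Col : Type) (E : V -> V -> bool)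
    (c : colouring Col E) (K S : set V) : Prop :=
  K `&` S = set0 /\
  forall v : V,
    (exists2 k, K k & mono_path_le2 c k v) \/
    (exists2 s, S s & mono_path_le2 c v s).

(* exp_0(T) = T, exp_{n+1}(T) = power set of exp_n(T); so the cardinality of
   expT n T is exp_n(|T|). *)
Fixpoint expT (n : nat) (T : Type) : Type :=
  match n with
  | 0 => T
  | n.+1 => set (expT n T)
  end.

(* A vertex v is a pivot of a vertex set X when every colour on an arc entering
   v from X also occurs on an arc leaving v into X.  A pivot of X, together with
   one out-neighbour in X of each such colour as serfs, is a king-serf duo for X
   of size at most kappa + 1: any other x in X either is entered from v, or sends
   an arc of some colour a to v, which continues in colour a to the serf of a.
   So it suffices to partition V into boundedly many parts with a pivot.

   For k colours, a part without pivot is split by choosing, at each vertex, a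
   colour that enters but does not leave it; inside the class of colour a no
   arc has colour a, so induction on the set of colours bounds the size of the
   duo by (k+1)^(k+1).

   In general, V is refined transfinitely: a pivotless node is split according
   to the pair (in-colours, out-colours) of its vertices, and intersections of
   nodes are nodes.  Nodes form a laminar tree, the least node containing a
   vertex has a pivot, and distinct least nodes are told apart by the pairs
   (inner colours, colour type) collected along their ancestors; hence there
   are at most 2^(2^kappa * 2^kappa * 2^kappa) parts, each contributing at most
   kappa + 1 vertices. *)

From HB Require Import structures.
From mathcomp Require Import all_boot.
From mathcomp Require Import boolp classical_sets functions cardinality.
From mathcomp Require Import zify.
Local Open Scope classical_set_scope.
Local Open Scope card_scope.
Set Implicit Arguments. Unset Strict Implicit. Unset Printing Implicit Defensive.

Lemma setI_eq0_mem (T : Type) (A B : set T) (x : T) :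
  A `&` B = set0 -> A x -> B x -> False.
Proof. by move=> AB Ax Bx; have : (A `&` B) x by []; rewrite AB. Qed.

Definition embeds (A B : Type) : Prop := exists f : A -> B, injective f.

Lemma embeds_trans (A B C : Type) : embeds A B -> embeds B C -> embeds A C.
Proof. by move=> [f f_inj] [g g_inj]; exists (g \o f); apply: inj_comp. Qed.

Lemma embeds_set1 (A : Type) : embeds A (set A).
Proof. by exists set1 => x y exy; have : [set x] y by rewrite exy. Qed.

Lemma embeds_image (A B : Type) : embeds A B -> embeds (set A) (set B).
Proof.
move=> [f f_inj]; exists (image^~ f) => X Y eXY; apply/seteqP; split=> x.
- by rewrite -(image_inj (A := X) f_inj) eXY image_inj.
- by rewrite -(image_inj (A := Y) f_inj) -eXY image_inj.
Qed.

Lemma embeds_option (A : Type) : embeds (option A) (set A).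
Proof.
exists (fun o => if o is Some a then [set a] else set0) => [[a|] [b|]] // e.
- by have : [set b] b by []; rewrite -e => ->.
- by have : [set a] a by []; rewrite e.
- by have : [set b] b by []; rewrite -e.
Qed.

Lemma embeds_pair (A B T : Type) :
  embeds A T -> embeds B T -> embeds (A * B) (set (set T)).
Proof.
move=> [f f_inj] [g g_inj].
pose kpair (x y : T) : set (set T) := [set [set x]; [set x; y]].
have kpair_cap x y : \bigcap_(X in kpair x y) X = [set x].
  by rewrite bigcap_setU1 bigcap_set1 setIidl // => z ->; left.
have kpair_cup x y : \bigcup_(X in kpair x y) X = [set x; y].
  by rewrite bigcup_setU1 bigcup_set1 setUA setUid.
have kpair_inj x y x' y' : kpair x y = kpair x' y' -> x = x' /\ y = y'.
  move=> e; have ex : x = x'.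
    by have : [set x] x' by rewrite -(kpair_cap x y) e kpair_cap.
  subst x'; split => //; move: (kpair_cup x y); rewrite e kpair_cup => exy.
  have : [set x; y'] y by rewrite exy; right.
  have : [set x; y] y' by rewrite -exy; right.
  by case=> [-> [] |].
exists (fun p => kpair (f p.1) (g p.2)) => -[a b] [a' b'] /kpair_inj[].
by move=> /f_inj /= -> /g_inj /= ->.
Qed.

Lemma embeds_expT (d n : nat) (T : Type) : embeds (expT n T) (expT (d + n) T).
Proof.
elim: d => [|d IH]; first by exists id.
exact: embeds_trans IH (embeds_set1 _).
Qed.

Lemma card_le_embeds (A B : Type) : embeds A B -> [set: A] #<= [set: B].
Proof.
move=> [f f_inj]; rewrite -(card_le_eql (inj_card_eq (in2W f_inj))).
exact: card_leT.
Qed.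

Lemma card_le_ord (T : finType) (n : nat) :
  (#|T| <= n)%N -> [set: T] #<= [set: 'I_n].
Proof.
move=> Tn; apply: card_le_embeds; exists (widen_ord Tn \o enum_rank).
by move=> x y [] /ord_inj /enum_rank_inj.
Qed.

Lemma card_le_bigcup (I B T : Type) (F : I -> set T) :
  (forall i, F i #<= [set: B]) -> \bigcup_i F i #<= [set: I * B].
Proof.
elim/Ppointed: T => T in F *; first by rewrite emptyE.
move=> FB; have /choice[g g_surj] : forall i, exists g : B -> T, set_surj setT (F i) g.
  by move=> i; apply/pcard_surjP.
apply/pcard_surjP; exists (fun p => g p.1 p.2) => x [i _ Fix].
by have [b _ <-] := g_surj i x Fix; exists (i, b).
Qed.

Lemma card_le_expT10 (Col : Type) :
  [set: set (set Col * (set Col * set Col)) * option Col] #<= [set: expT 10 Col].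
Proof.
have e1 : embeds (set Col) (expT (0 + 1) Col) := embeds_expT 0 1 Col.
have eQ : embeds (set Col * (set Col * set Col)) (expT 5 Col).
  exact: embeds_pair (embeds_expT 2 1 Col) (embeds_pair e1 e1).
have eO : embeds (option Col) (expT 6 Col).
  exact: embeds_trans (embeds_option Col) (embeds_expT 5 1 Col).
apply: card_le_embeds; apply: embeds_trans (embeds_expT 2 8 Col).
exact: embeds_pair (embeds_image eQ) eO.
Qed.

Section Duos.
Variables (Col V : Type) (E : V -> V -> bool) (c : colouring Col E).
Arguments c : clear implicits.

Definition covers (K S : set V) : set V := fun v =>
  (exists2 k, K k & mono_path_le2 c k v) \/ (exists2 s, S s & mono_path_le2 c v s).

Definition duo_on (X K S : set V) : Prop :=
  [/\ K `<=` X, S `<=` X, K `&` S = set0 & X `<=` covers K S].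

Definition has_duo (B : Type) (X : set V) : Prop :=
  exists K S, duo_on X K S /\ K `|` S #<= [set: B].

Lemma covers_sub (K S K' S' : set V) :
  K `<=` K' -> S `<=` S' -> covers K S `<=` covers K' S'.
Proof.
move=> KK' SS' v [[k Kk kv]|[s Ss vs]]; [left; exists k | right; exists s] => //.
- exact: KK'.
- exact: SS'.
Qed.

Lemma king_serf_duo_setT (K S : set V) : duo_on setT K S -> king_serf_duo c K S.
Proof. by case=> _ _ KS cov; split=> // v; apply: cov. Qed.

Lemma has_duo_sub0 (B : Type) (X : set V) : X `<=` set0 -> has_duo B X.
Proof.
rewrite subset0 => ->; exists set0, set0; split; last by rewrite setU0; apply: card_ge0.
by split=> //; rewrite setI0.
Qed.

Lemma has_duo_le (B B' : Type) (X : set V) :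
  [set: B] #<= [set: B'] -> has_duo B X -> has_duo B' X.
Proof.
by move=> BB' [K [S [duo KS]]]; exists K, S; split=> //; apply: card_le_trans BB'.
Qed.

Lemma has_duo_partition (I B : Type) (w : V -> I) (X : set V) :
  (forall i, has_duo B (X `&` w @^-1` [set i])) -> has_duo (I * B) X.
Proof.
move=> parts.
have /choice[KS duoKS] : forall i, exists KS : set V * set V,
    duo_on (X `&` w @^-1` [set i]) KS.1 KS.2 /\ KS.1 `|` KS.2 #<= [set: B].
  by move=> i; have [K [S duo]] := parts i; exists (K, S).
exists (\bigcup_i (KS i).1), (\bigcup_i (KS i).2); split; last first.
  apply: card_le_trans (card_le_bigcup (fun i => (duoKS i).2)).
  by apply: subset_card_le => x [] [i _ KSx]; exists i => //; [left | right].
have Ksub i : (KS i).1 `<=` X `&` w @^-1` [set i] by case: (duoKS i) => -[].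
have Ssub i : (KS i).2 `<=` X `&` w @^-1` [set i] by case: (duoKS i) => -[].
split.
- by move=> x [i _ /Ksub []].
- by move=> x [i _ /Ssub []].
- apply/disjoints_subset => x [i _ Kx] [j _ Sx].
  have [_ wi] := Ksub i x Kx; have [_ wj] := Ssub j x Sx.
  have [[_ _ KSi _] _] := duoKS i; move: Sx; rewrite -wj wi.
  exact: setI_eq0_mem KSi Kx.
- move=> x Xx; have [[_ _ _ cov] _] := duoKS (w x).
  by apply: covers_sub (cov x (conj Xx erefl)) => y Ky; exists (w x).
Qed.

Definition in_colours (X : set V) (v : V) : set Col :=
  [set a | exists u (h : E u v), X u /\ c u v h = a].

Definition out_colours (X : set V) (v : V) : set Col :=
  [set a | exists w (h : E v w), X w /\ c v w h = a].

Definition colour_type (X : set V) (v : V) := (in_colours X v, out_colours X v).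

Definition inner_colours (X : set V) : set Col :=
  [set a | exists u w (h : E u w), [/\ X u, X w & c u w h = a]].

Definition pivot (X : set V) (v : V) : Prop := X v /\ in_colours X v `<=` out_colours X v.

Definition has_pivot (X : set V) : Prop := exists v, pivot X v.

Lemma not_pivot_colour (X : set V) v :
  X v -> ~ pivot X v -> exists a, in_colours X v a /\ ~ out_colours X v a.
Proof.
move=> Xv np; apply: contrapT => nex; apply: np; split=> // a ia.
by apply: contrapT => oa; apply: nex; exists a.
Qed.

Lemma in_colours_inner (X : set V) v : X v -> in_colours X v `<=` inner_colours X.
Proof. by move=> Xv _ [u [h [Xu <-]]]; exists u, v, h. Qed.

Lemma inner_colours_avoid (X Y : set V) a :
  Y `<=` X -> (forall u, Y u -> ~ out_colours X u a) ->
  inner_colours Y `<=` inner_colours X `\ a.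
Proof.
move=> YX Ya _ [u [y [h [Yu Yy <-]]]]; split.
  by exists u, y, h; split=> //; apply: YX.
by move=> ca; apply: (Ya u Yu); rewrite -ca; exists y, h; split=> //; apply: YX.
Qed.

Lemma pivot_has_duo (X : set V) (v : V) :
  tournament E -> pivot X v -> has_duo (option Col) X.
Proof.
move=> [irr [tot _]] [Xv in_out].
have [serf serfP] : {serf : Col -> V & forall a, out_colours X v a ->
    exists h : E v (serf a), X (serf a) /\ c v (serf a) h = a}.
  apply: (@choice _ _ (fun a w => out_colours X v a ->
    exists h : E v w, X w /\ c v w h = a)) => a.
  have [[w [h Xw]]|nout] := pselect (out_colours X v a).
    by exists w => _; exists h.
  by exists v => /nout.
have serf_neq a : out_colours X v a -> serf a <> v.
  by move=> /serfP[h _] ev; move: (irr v); rewrite -{2}ev h.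
exists [set v], (serf @` out_colours X v); split; last first.
  pose g o := if o is Some a then serf a else v.
  apply: card_le_trans (card_image_le g setT); apply: subset_card_le.
  by move=> _ [->|[a _ <-]]; [exists None | exists (Some a)].
split=> [_ -> //|_ [a /serfP [h [Xs _]] <-] //||x Xx].
  by apply/disjoints_subset => _ -> [a /serf_neq].
have [->|xv] := pselect (x = v); first by left; exists v => //; left.
have /orP [vx|xv'] := tot v x (nesym xv); first by left; exists v => //; right; left.
have out_a : out_colours X v (c x v xv') by apply: in_out; exists x, xv'.
have [h' [_ ca]] := serfP _ out_a.
right; exists (serf (c x v xv')); first by exists (c x v xv').
have [<-|xs] := pselect (x = serf (c x v xv')); first by left.
by right; right; exists v, xv', h'; split=> //; apply/nesym/serf_neq.
Qed.

Definition refine (X : set V) (t : set Col * set Col) : set V :=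
  [set v | X v /\ colour_type X v = t].

Inductive node : set V -> Prop :=
| node_setT : node setT
| node_refine X t : node X -> ~ has_pivot X -> node (refine X t)
| node_bigcap (F : set (set V)) : F `<=` node -> node (\bigcap_(X in F) X).

Definition below (M N : set V) : Prop :=
  ~ has_pivot N /\ exists t, M `<=` refine N t.

Definition nested (N M : set V) : Prop :=
  [\/ N `&` M = set0, N = M, below N M | below M N].

Lemma refine_sub (X : set V) t : refine X t `<=` X.
Proof. by move=> v []. Qed.

Lemma below_sub (M N : set V) : below M N -> M `<=` N.
Proof. by move=> [_ [t /subset_trans]]; apply; apply: refine_sub. Qed.

Lemma refine_disj (X : set V) t s : t <> s -> refine X t `&` refine X s = set0.
Proof.
by move=> ts; apply/disjoints_subset => v [_ tv] [_ sv]; apply: ts; rewrite -tv.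
Qed.

Lemma pivot_refine (X : set V) t v : X `<=` refine X t -> X v -> pivot X v.
Proof.
move=> Xt Xv; split=> // _ [u [h [Xu <-]]].
have [_ tu] := Xt u Xu; have [_ tv] := Xt v Xv.
have : out_colours X u (c u v h) by exists v, h.
by rewrite -[out_colours X u]/((colour_type X u).2) tu -tv.
Qed.

Lemma below_subl (M M' N : set V) : M `<=` M' -> below M' N -> below M N.
Proof. by move=> MM' [np [t M't]]; split=> //; exists t; apply: subset_trans M't. Qed.

Lemma nested_of_supsets (N : set V) :
  (forall M, node M -> N `<=` M -> nested N M) -> forall M, node M -> nested N M.
Proof.
move=> sup M; elim=> {M} [|X t nX IHX npX|F nF IHF].
- exact: sup node_setT _.
- case: IHX => [NX|->|[_ [s Ns]]|XN].
  + apply: Or41; exact: (subsetI_eq0 (@subset_refl _ N) (@refine_sub X t) NX).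
  + by apply: Or44; split=> //; exists t.
  + have [<-|st] := pselect (s = t); first exact/sup/Ns/node_refine.
    apply: Or41; exact: (subsetI_eq0 Ns (@subset_refl _ _) (refine_disj X st)).
  + apply: Or44; exact: (below_subl (@refine_sub X t) XN).
- have [[Y FY NY]|nodisj] := pselect (exists2 Y, F Y & N `&` Y = set0).
    apply: Or41; exact: (subsetI_eq0 (@subset_refl _ N) (bigcap_inf FY) NY).
  have [[Y FY YN]|nobelow] := pselect (exists2 Y, F Y & below Y N).
    apply: Or44; exact: (below_subl (bigcap_inf FY) YN).
  apply: sup; first exact: node_bigcap.
  move=> x Nx Y FY; case: (IHF Y FY) => [NY|<-//|/below_sub|YN].
  + by case: nodisj; exists Y.
  + exact.
  + by case: nobelow; exists Y.
Qed.

Lemma nested_nodes (N M : set V) : node N -> node M -> nested N M.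
Proof.
move=> nN; elim: nN M => {N} [|X t nX IHX npX|F nF IHF]; apply: nested_of_supsets.
- by move=> M _ TM; apply: Or42; apply/seteqP; split.
- move=> M nM XtM; case: (IHX M nM) => [XM|<-|XM|[npM [s Ms]]].
  + apply: Or41; exact: (subsetI_eq0 (@refine_sub X t) (@subset_refl _ M) XM).
  + by apply: Or43; split=> //; exists t.
  + apply: Or43; exact: (below_subl (@refine_sub X t) XM).
  + have [est|ts] := pselect (s = t).
      by subst s; apply: Or42; apply/seteqP; split.
    apply: Or41; exact: (subsetI_eq0 (@subset_refl _ _) Ms (refine_disj X (nesym ts))).
- move=> M nM FM.
  have [[Y FY YM]|nodisj] := pselect (exists2 Y, F Y & Y `&` M = set0).
    apply: Or41; exact: (subsetI_eq0 (bigcap_inf FY) (@subset_refl _ M) YM).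
  have [[Y FY YM]|nobelow] := pselect (exists2 Y, F Y & below Y M).
    apply: Or43; exact: (below_subl (bigcap_inf FY) YM).
  apply: Or42; apply/seteqP; split=> // x Mx Y FY.
  case: (IHF Y FY M nM) => [YM|->//|YM|/below_sub]; last exact.
  + by case: nodisj; exists Y.
  + by case: nobelow; exists Y.
Qed.

Definition least_node (u : V) : set V :=
  \bigcap_(N in [set N | node N /\ N u]) N.

Lemma least_node_node u : node (least_node u).
Proof. by apply: node_bigcap => N []. Qed.

Lemma least_node_self u : least_node u u.
Proof. by move=> N []. Qed.

Lemma least_node_min u N : node N -> N u -> least_node u `<=` N.
Proof. by move=> nN Nu; apply: bigcap_inf. Qed.

Lemma least_node_pivot u : has_pivot (least_node u).
Proof.
apply: contrapT => np; set t := colour_type (least_node u) u.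
have sub : least_node u `<=` refine (least_node u) t.
  apply: least_node_min; first exact: node_refine t (@least_node_node u) np.
  by split=> //; apply: least_node_self.
by apply: np; exists u; apply: pivot_refine sub (@least_node_self u).
Qed.

Lemma least_node_below u N :
  node N -> N u -> least_node u <> N -> below (least_node u) N.
Proof.
move=> nN Nu neq; case: (nested_nodes (@least_node_node u) nN) => [D|/neq []|//|[np _]].
- by case: (setI_eq0_mem D (@least_node_self u) Nu).
- by case: np; apply: least_node_pivot.
Qed.

Lemma least_node_eq u x : least_node u x -> least_node x = least_node u.
Proof.
move=> ux; apply: contrapT => neq.
have [np _] := least_node_below (@least_node_node u) ux neq.
by apply: np; apply: least_node_pivot.
Qed.

Lemma pivot_of_refine_inner (Y M : set V) v :
  Y v -> M `<=` refine Y (colour_type Y v) -> inner_colours Y `<=` inner_colours M ->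
  pivot Y v.
Proof.
move=> Yv MY YM; split=> // _ [u [h [Yu <-]]].
have /YM [x [y [h' [Mx My <-]]]] : inner_colours Y (c u v h) by exists u, v, h.
have [_ tx] := MY x Mx; have [Yy _] := MY y My.
have : out_colours Y x (c x y h') by exists y, h'.
by rewrite -[out_colours Y x]/((colour_type Y x).2) tx.
Qed.

Definition node_label (N : set V) : set (set Col * (set Col * set Col)) :=
  [set p | exists Y x,
    [/\ node Y, N `<=` Y, N x & p = (inner_colours Y, colour_type Y x)]].

(* With Z the least node containing u and w, the classes of u and w lie in
   different refinements of Z; a node Y around the class of w with the label
   (inner colours of Z, type of u in Z) cannot be Z, and otherwise
   [pivot_of_refine_inner] gives a pivot to the pivotless one of Y and Z. *)
Lemma least_node_label_inj u w :
  node_label (least_node u) = node_label (least_node w) -> least_node u = least_node w.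
Proof.
move=> label_eq; apply: contrapT => neq.
pose Z := \bigcap_(Y in [set Y | node Y /\ Y u /\ Y w]) Y.
have nZ : node Z by apply: node_bigcap => Y [].
have Zu : Z u by move=> Y [_ []].
have Zw : Z w by move=> Y [_ []].
have below_Z x y : Z x -> Z y -> least_node x <> least_node y -> below (least_node x) Z.
  move=> Zx Zy nxy; apply: least_node_below => // eZ; apply: nxy.
  by apply/esym/least_node_eq; rewrite eZ.
have [npZ [t ut]] := below_Z u w Zu Zw neq.
have [_ [t' wt']] := below_Z w u Zw Zu (nesym neq).
have [_ tu] := ut u (@least_node_self u); have [_ tw] := wt' w (@least_node_self w).
have neq_t : t <> t'.
  move=> ett; subst t'; apply: (npZ); exists u; apply: (pivot_refine _ Zu) => x Zx.
  by apply: (Zx (refine Z t)); split; [exact: node_refine t nZ npZ | split; split].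
have : node_label (least_node u) (inner_colours Z, t).
  by exists Z, u; split; [| exact: least_node_min | exact: least_node_self | rewrite tu].
rewrite label_eq => -[Y [x [nY wY wx [iYZ tYx]]]].
have Yw : Y w := wY w (@least_node_self w).
case: (nested_nodes nY nZ) => [D|eYZ|YZ|ZY].
- exact: setI_eq0_mem D Yw Zw.
- by subst Y; apply: neq_t; rewrite tYx; case: (wt' x wx).
- have [_ [s Ys]] := YZ; have [_ ws] := Ys w Yw; subst s.
  by apply: npZ; exists w; apply: pivot_of_refine_inner Zw Ys _; rewrite iYZ.
- have [npY [s Zs]] := ZY; have [_ ws] := Zs w Zw; subst s.
  by apply: npY; exists w; apply: pivot_of_refine_inner Yw Zs _; rewrite iYZ.
Qed.

Lemma tournament_has_duo :
  tournament E -> has_duo (set (set Col * (set Col * set Col)) * option Col) setT.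
Proof.
move=> tourE; apply: (has_duo_partition (w := node_label \o least_node)) => i.
have [[u _ <-]|noi] := pselect (range (node_label \o least_node) i); last first.
  by apply: has_duo_sub0 => x [_ xi]; apply: noi; exists x.
have -> : setT `&` (node_label \o least_node) @^-1` [set node_label (least_node u)] =
    least_node u.
  apply/seteqP; split=> [x [_ /least_node_label_inj <-]|x ux].
    exact: least_node_self.
  by split=> //=; rewrite (least_node_eq ux).
have [v pv] := @least_node_pivot u; exact: pivot_has_duo tourE pv.
Qed.

End Duos.

Section FiniteColours.
Variables (k : nat) (V : Type) (E : V -> V -> bool) (c : colouring 'I_k E).
Arguments c : clear implicits.
Hypothesis tourE : tournament E.

Definition missing_colour (X : set V) (v : V) : option 'I_k :=
  [pick a | `[< in_colours c X v a /\ ~ out_colours c X v a >] ].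

Lemma missing_colour_some (X : set V) v a :
  missing_colour X v = Some a -> in_colours c X v a /\ ~ out_colours c X v a.
Proof. by rewrite /missing_colour; case: pickP => // b /asboolP ? [<-]. Qed.

Lemma missing_colour_none (X : set V) v :
  X v -> missing_colour X v = None -> pivot c X v.
Proof.
move=> Xv; rewrite /missing_colour; case: pickP => // none _.
apply: contrapT => /(not_pivot_colour Xv) [a /asboolP].
by rewrite none.
Qed.

Lemma pivot_has_duo_ord n (X : set V) : has_pivot c X -> has_duo c 'I_(k.+1 ^ n.+1) X.
Proof.
move=> [v pv]; apply: has_duo_le (pivot_has_duo tourE pv); apply: card_le_ord.
by rewrite card_option card_ord -{1}[k.+1]expn1 leq_pexp2l.
Qed.

Lemma has_duo_inner_colours n (X : set V) (D : {set 'I_k}) :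
  (#|D| <= n)%N -> inner_colours c X `<=` [set a | a \in D] ->
  has_duo c 'I_(k.+1 ^ n.+1) X.
Proof.
elim: n X D => [|n IH] X D Dn XD;
  have [/pivot_has_duo_ord //|np] := pselect (has_pivot c X).
  apply: has_duo_sub0 => v Xv.
  have [a [ia _]] := not_pivot_colour Xv (fun pv => np (ex_intro _ v pv)).
  move: (XD a (in_colours_inner Xv ia)) Dn; rewrite leqn0 cards_eq0 => /[swap] /eqP ->.
  by rewrite /= finset.in_set0.
apply: (@has_duo_le _ _ _ c (option 'I_k * 'I_(k.+1 ^ n.+1))).
  by apply: card_le_ord; rewrite card_prod card_option !card_ord -expnS.
apply: (has_duo_partition (w := missing_colour X)) => -[a|]; last first.
  apply: has_duo_sub0 => v [Xv wv].
  by apply: np; exists v; apply: missing_colour_none.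
have [aD|aD] := boolP (a \in D); last first.
  apply: has_duo_sub0 => v [Xv /missing_colour_some [ia _]].
  by move: aD; rewrite (XD a (in_colours_inner Xv ia)).
apply: (IH _ (D :\ a)).
  by move: Dn; rewrite (cardsD1 a D) aD add1n ltnS.
have avoid_a : inner_colours c (X `&` missing_colour X @^-1` [set Some a]) `<=`
    inner_colours c X `\ a.
  by apply: inner_colours_avoid => [u []|u [_ /missing_colour_some []]].
move=> b /avoid_a [/XD bD nab]; rewrite /= finset.in_setD1 bD andbT.
exact/eqP.
Qed.

End FiniteColours.

Lemma leq_expSS_expM (k m : nat) : (3 <= m)%N -> k != 1 -> (k.+1 ^ k.+1 <= k ^ (m * k))%N.
Proof.
move=> m3; case: k => [|[|k]] // _; first by rewrite muln0.
have sq : (k.+3 <= k.+2 ^ 2)%N by rewrite expnS expn1; nia.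
apply: (@leq_trans ((k.+2 ^ 2) ^ k.+3)); first by rewrite leq_exp2r.
by rewrite -expnM leq_pexp2l //; nia.
Qed.

Theorem theorem2 :
  (forall Col : Type,
    exists L : Type,
      ([set: L] #<= [set: expT 10 Col]) /\
      forall (V : Type) (E : V -> V -> bool) (c : colouring Col E),
        tournament E ->
        exists K S : set V, king_serf_duo c K S /\ ((K `|` S) #<= [set: L]))
  /\
  (forall k : nat, k != 1 ->
    exists l : nat,
      (l <= k ^ (62500 * k))%N /\
      forall (V : Type) (E : V -> V -> bool) (c : colouring 'I_k E),
        tournament E ->
        exists K S : set V, king_serf_duo c K S /\ ((K `|` S) #<= [set: 'I_l])).
Proof.
split=> [Col | k k1].
  exists (set (set Col * (set Col * set Col)) * option Col)%type.
  split=> [|V E c tourE]; first exact: card_le_expT10.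
  have [K [S [duo KS]]] := tournament_has_duo c tourE.
  by exists K, S; split; first exact: king_serf_duo_setT.
exists (k.+1 ^ k.+1); split=> [|V E c tourE]; first exact: leq_expSS_expM.
have [K [S [duo KS]]] : has_duo c 'I_(k.+1 ^ k.+1) setT.
  apply: (has_duo_inner_colours tourE (D := [set: 'I_k])) => [|a _].
  - by rewrite finset.cardsT card_ord.
  - by rewrite /= finset.in_setT.
by exists K, S; split; first exact: king_serf_duo_setT.
Qed.
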